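(* For any $F\in\mathscr{F}_2$ and $i\in[F]$, the map $f_i$ is injective.
   Context: $\mathcal{S}$ is a finite source alphabet with $|\mathcal{S}|\ge 2$ and $\mathcal{C}=\{0,1\}$; $\mathcal{A}^k,\mathcal{A}^{\ast},\mathcal{A}^{+}$ are sequences of length $k$, finite, positive finite length; $\lambda$ empty sequence; $\preceq$ prefix, $\prec$ proper prefix; $\mathrm{suff}(x_1\cdots x_n)=x_2\cdots x_n$. A code-tuple $F$ with $m\ge1$ code tables consists of maps $f_i:\mathcal{S}\to\mathcal{C}^{\ast}$ and $\tau_i:\mathcal{S}\to\{0,\dots,m-1\}$, $i\in[F]=\{0,\dots,m-1\}$. $f_i^{\ast}(\lambda)=\lambda$, $f_i^{\ast}(\pmb{x})=f_i(x_1)f^{\ast}_{\tau_i(x_1)}(\mathrm{suff}(\pmb{x}))$. For integer $k\ge0$, $\pmb{b}\in\mathcal{C}^{\ast}$: $\mathcal{P}^k_{F,i}(\pmb{b})$ is the set of $\pmb{c}\in\mathcal{C}^k$ such that some $\pmb{x}=x_1\cdots x_n\in\mathcal{S}^{+}$ has $f_i^{\ast}(\pmb{x})\succeq\pmb{b}\pmb{c}$ and $f_i(x_1)\succeq\pmb{b}$; $\bar{\mathcal{P}}^k_{F,i}(\pmb{b})$ the same with $f_i(x_1)\succ\pmb{b}$; $\mathcal{P}^k_{F,i}=\mathcal{P}^k_{F,i}(\lambda)$. $F\in\mathscr{F}_{2\text{-}\mathrm{dec}}$ if $\mathcal{P}^2_{F,\tau_i(s)}\cap\bar{\mathcal{P}}^2_{F,i}(f_i(s))=\emptyset$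 for all $i,s$, and $\mathcal{P}^2_{F,\tau_i(s)}\cap\mathcal{P}^2_{F,\tau_i(s')}=\emptyset$ whenever $s\ne s'$, $f_i(s)=f_i(s')$. Fix $\mu:\mathcal{S}\to(0,1]$ with $\sum_s\mu(s)=1$; $Q_{i,j}(F)=\sum_{s:\tau_i(s)=j}\mu(s)$; $F\in\mathscr{F}_{\mathrm{reg}}$ if $\pmb{\pi}Q(F)=\pmb{\pi}$, $\sum_i\pi_i=1$ has a unique solution. $\mathscr{F}_2=\{F\in\mathscr{F}_{\mathrm{reg}}\cap\mathscr{F}_{2\text{-}\mathrm{dec}}:|\mathcal{P}^2_{F,i}|\ge3\ \forall i\in[F]\}$. *)

From HB Require Import structures.
From mathcomp Require Import all_boot all_order all_algebra.
From mathcomp Require Import boolp reals.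
Set Implicit Arguments. Unset Strict Implicit. Unset Printing Implicit Defensive.
Import Order.TTheory GRing.Theory Num.Theory.

Section CodeTuple.
Variables (S : finType) (m : nat).
(* A code-tuple with m code tables: f i : S -> C^*, tau i : S -> [F]. *)
Variables (f : 'I_m -> S -> seq bool) (tau : 'I_m -> S -> 'I_m).

Fixpoint fstar (i : 'I_m) (x : seq S) : seq bool :=
  match x with
  | [::] => [::]
  | s :: x' => f i s ++ fstar (tau i s) x'
  end.

Definition inP (k : nat) (i : 'I_m) (b : seq bool) (c : k.-tuple bool) : Prop :=
  exists (x1 : S) (x' : seq S),
    prefix (b ++ c) (fstar i (x1 :: x')) /\ prefix b (f i x1).

Definition inPbar (k : nat) (i : 'I_m) (b : seq bool) (c : k.-tuple bool) : Prop :=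
  exists (x1 : S) (x' : seq S),
    prefix (b ++ c) (fstar i (x1 :: x')) /\ prefix b (f i x1) /\ b != f i x1.

Definition Pset (k : nat) (i : 'I_m) (b : seq bool) : {set k.-tuple bool} :=
  [set c | `[< inP i b c >]].
Definition Pbarset (k : nat) (i : 'I_m) (b : seq bool) : {set k.-tuple bool} :=
  [set c | `[< inPbar i b c >]].

Definition two_dec : Prop :=
  (forall (i : 'I_m) (s : S), Pset 2 (tau i s) [::] :&: Pbarset 2 i (f i s) = set0) /\
  (forall (i : 'I_m) (s s' : S), s != s' -> f i s = f i s' ->
      Pset 2 (tau i s) [::] :&: Pset 2 (tau i s') [::] = set0).

Local Open Scope ring_scope.
Variable R : realType.
Variable mu : S -> R.

Definition Qmx : 'M[R]_m := \matrix_(i, j) \sum_(s | tau i s == j) mu s.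

Definition regular : Prop :=
  exists! pi : 'rV[R]_m, pi *m Qmx = pi /\ \sum_(j < m) pi 0 j = 1.

Definition in_F2 : Prop :=
  regular /\ two_dec /\ forall i : 'I_m, (3 <= #|Pset 2 i [::]|)%N.

End CodeTuple.

(* If f_i(s) = f_i(s') for s <> s', the second condition of 2-decodability
   makes P^2 of tau_i(s) and of tau_i(s') disjoint; but each contains at
   least 3 of the only 4 binary words of length 2. *)
From mathcomp Require Import all_boot all_order all_algebra.
From mathcomp Require Import boolp reals.
Import Order.TTheory GRing.Theory Num.Theory.

Lemma setI_neq0_card (T : finType) (A B : {set T}) :
  (#|T| < #|A| + #|B|)%N -> A :&: B != set0.
Proof.
apply: contraTneq => disjAB; rewrite -leqNgt -cardsUI disjAB cards0 addn0.
exact: max_card.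
Qed.

Lemma card_pair_bool : #|{: 2.-tuple bool}| = 4.
Proof. by rewrite card_tuple card_bool. Qed.

Lemma two_dec_injective (S : finType) (m : nat)
    (f : 'I_m -> S -> seq bool) (tau : 'I_m -> S -> 'I_m) :
  two_dec f tau -> (forall i, 3 <= #|Pset f tau 2 i [::]|)%N ->
  forall i, injective (f i).
Proof.
move=> [_ disj_same_word] large i s s' eq_f.
case: (eqVneq s s') => // neq_ss'.
have: Pset f tau 2 (tau i s) [::] :&: Pset f tau 2 (tau i s') [::] != set0.
  apply: setI_neq0_card; rewrite card_pair_bool.
  exact: leq_trans _ (leq_add (large (tau i s)) (large (tau i s'))).
by rewrite (disj_same_word i s s' neq_ss' eq_f) eqxx.
Qed.

Theorem lemma23 (R : realType) (S : finType) (m : nat)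
    (mu : S -> R)
    (f : 'I_m -> S -> seq bool) (tau : 'I_m -> S -> 'I_m) :
  (1 < #|S|)%N ->
  (0 < m)%N ->
  (forall s, (0 < mu s)%R /\ (mu s <= 1)%R) ->
  (\sum_(s : S) mu s = 1)%R ->
  in_F2 f tau mu ->
  forall i : 'I_m, injective (f i).
Proof.
move=> _ _ _ _ [_ [dec large]].
exact: two_dec_injective dec large.
Qed.
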